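(* Let $(X,f)$ be a dynamical system. If $(X,f)$ is $\Delta$-transitive with respect to $(1,2)$, then $(X,f)$ is weakly mixing.
   Context: A dynamical system is a pair $(X,f)$ with $X$ a compact metric space and $f:X\to X$ continuous. For a system $(Y,g)$, a point $y$ is a transitive point if its $\omega$-limit set equals $Y$; $(Y,g)$ is transitive if for all non-empty open $U,V\subset Y$ there is $n\in\mathbb{N}$ with $U\cap g^{-n}(V)\neq\emptyset$. $(X,f)$ is weakly mixing if $(X\times X,f\times f)$ is transitive. $(X,f)$ is $\Delta$-transitive with respect to $(1,2)$ if there is $x\in X$ such that $(x,x)$ is a transitive point of $(X\times X,f\times f^2)$. *)

From Stdlib Require Import Reals Lra Rlimit.
Open Scope R_scope.

Definition ball (M : Metric_Space) (x : Base M) (r : R) : Base M -> Prop :=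
  fun y => dist M x y < r.

Definition is_open (M : Metric_Space) (U : Base M -> Prop) : Prop :=
  forall x, U x -> exists r, 0 < r /\ forall y, ball M x r y -> U y.

Definition compact_space (M : Metric_Space) : Prop :=
  forall (I : Type) (U : I -> Base M -> Prop),
    (forall i, is_open M (U i)) ->
    (forall x, exists i, U i x) ->
    exists l : list I, forall x, exists i, List.In i l /\ U i x.

Definition continuous_map (M : Metric_Space) (f : Base M -> Base M) : Prop :=
  forall x eps, 0 < eps -> exists delta, 0 < delta /\
    forall y, dist M x y < delta -> dist M (f x) (f y) < eps.

Definition dynamical_system (M : Metric_Space) (f : Base M -> Base M) : Prop :=
  compact_space M /\ continuous_map M f.

Definition iter {A : Type} (n : nat) (g : A -> A) (x : A) : A := Nat.iter n g x.

Definition omega_limit (M : Metric_Space) (g : Base M -> Base M) (y : Base M)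
  : Base M -> Prop :=
  fun z => forall eps (N : nat), 0 < eps ->
    exists n : nat, (N <= n)%nat /\ dist M (iter n g y) z < eps.

Definition transitive_point (M : Metric_Space) (g : Base M -> Base M) (y : Base M)
  : Prop := forall z, omega_limit M g y z.

Definition transitive (M : Metric_Space) (g : Base M -> Base M) : Prop :=
  forall U V : Base M -> Prop, is_open M U -> is_open M V ->
    (exists u, U u) -> (exists v, V v) ->
    exists n : nat, (1 <= n)%nat /\ exists x, U x /\ V (iter n g x).

(** The product metric space X x X with the max metric (which induces the
    product topology). *)
Definition prod_dist (M : Metric_Space) (p q : Base M * Base M) : R :=
  Rmax (dist M (fst p) (fst q)) (dist M (snd p) (snd q)).

Lemma prod_dist_pos (M : Metric_Space) :
  forall p q, prod_dist M p q >= 0.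
Proof.
  intros p q; unfold prod_dist.
  pose proof (dist_pos M (fst p) (fst q)).
  pose proof (Rmax_l (dist M (fst p) (fst q)) (dist M (snd p) (snd q))). lra.
Qed.

Lemma prod_dist_sym (M : Metric_Space) :
  forall p q, prod_dist M p q = prod_dist M q p.
Proof.
  intros p q; unfold prod_dist; rewrite (dist_sym M (fst p)), (dist_sym M (snd p)).
  reflexivity.
Qed.

Lemma prod_dist_refl (M : Metric_Space) :
  forall p q, prod_dist M p q = 0 <-> p = q.
Proof.
  intros [a b] [c d]; unfold prod_dist; simpl; split.
  - intro H.
    pose proof (dist_pos M a c). pose proof (dist_pos M b d).
    pose proof (Rmax_l (dist M a c) (dist M b d)).
    pose proof (Rmax_r (dist M a c) (dist M b d)).
    assert (E1 : dist M a c = 0) by lra. assert (E2 : dist M b d = 0) by lra.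
    apply (dist_refl M) in E1; apply (dist_refl M) in E2; subst; reflexivity.
  - intro H; inversion H; subst.
    rewrite (proj2 (dist_refl M c c) eq_refl), (proj2 (dist_refl M d d) eq_refl).
    unfold Rmax; destruct (Rle_dec 0 0); reflexivity.
Qed.

Lemma prod_dist_tri (M : Metric_Space) :
  forall p q r, prod_dist M p q <= prod_dist M p r + prod_dist M r q.
Proof.
  intros [a b] [c d] [e g]; unfold prod_dist; simpl.
  pose proof (dist_tri M a c e). pose proof (dist_tri M b d g).
  pose proof (Rmax_l (dist M a e) (dist M b g)). pose proof (Rmax_r (dist M a e) (dist M b g)).
  pose proof (Rmax_l (dist M e c) (dist M g d)). pose proof (Rmax_r (dist M e c) (dist M g d)).
  apply Rmax_lub; lra.
Qed.

Definition prod_space (M : Metric_Space) : Metric_Space :=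
  Build_Metric_Space (Base M * Base M) (prod_dist M)
    (prod_dist_pos M) (prod_dist_sym M) (prod_dist_refl M) (prod_dist_tri M).

Definition prod_map {A : Type} (g1 g2 : A -> A) : A * A -> A * A :=
  fun p => (g1 (fst p), g2 (snd p)).

Definition weakly_mixing (M : Metric_Space) (f : Base M -> Base M) : Prop :=
  transitive (prod_space M) (prod_map f f).

Definition delta_transitive_12 (M : Metric_Space) (f : Base M -> Base M) : Prop :=
  exists x : Base M,
    transitive_point (prod_space M) (prod_map f (iter 2 f)) (x, x).

(** Let [x] be a point such that [(x, x)] is a transitive point of
    [f x f^2].  Then for all non-empty open [A], [B] and every [N] there are
    arbitrarily late times [j >= N] with [f^j x] in [A] and [f^(2j) x] in [B]
    (Lemma [delta_orbit_visits]).  To prove weak mixing it suffices to handle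
    products of balls [U1 x U2] and [V1 x V2] (Lemma [transitive_of_rectangles]),
    and there we look for times [i] and [j >= 1] with
        [f^i x] in [U1],  [f^j x] in [U2],  [f^(i+j) x] in [V1],  [f^(2j) x] in [V2],
    for then the point [(f^i x, f^j x)] of [U1 x U2] is sent by [(f x f)^j]
    into [V1 x V2].  Such times are produced by three successive uses of
    [delta_orbit_visits] on open sets built from preimages under iterates of
    [f] (Lemmas [three_visits] and [four_visits]); continuity of [f] is what
    keeps those preimages open. *)

From Stdlib Require Import Reals Rlimit Lra Lia.
Open Scope R_scope.

(** [Nat.iter_add] restated for the [iter] of the definitions, so it rewrites. *)
Lemma iter_add {A : Type} (g : A -> A) (a b : nat) (y : A) :
  iter (a + b) g y = iter a g (iter b g y).
Proof. apply Nat.iter_add. Qed.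

Lemma iter_prod_map {A : Type} (g h : A -> A) (n : nat) (p : A * A) :
  iter n (prod_map g h) p = (iter n g (fst p), iter n h (snd p)).
Proof.
  induction n as [|n IH]; [destruct p; reflexivity|].
  change (iter (S n) (prod_map g h) p) with (prod_map g h (iter n (prod_map g h) p)).
  rewrite IH. reflexivity.
Qed.

Lemma iter_iter2 {A : Type} (g : A -> A) (n : nat) (y : A) :
  iter n (iter 2 g) y = iter (2 * n) g y.
Proof.
  induction n as [|n IH]; [reflexivity|].
  change (iter (S n) (iter 2 g) y) with (iter 2 g (iter n (iter 2 g) y)).
  rewrite IH, <- iter_add. f_equal. lia.
Qed.

Lemma continuous_iter (M : Metric_Space) (g : Base M -> Base M) (k : nat) :
  continuous_map M g -> continuous_map M (iter k g).
Proof.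
  intros Hg. induction k as [|k IH]; intros y eps Heps.
  - exists eps. split; [exact Heps | intros z Hz; exact Hz].
  - destruct (Hg (iter k g y) eps Heps) as [d1 [Hd1 Hstep]].
    destruct (IH y d1 Hd1) as [d2 [Hd2 Hprev]].
    exists d2. split; [exact Hd2|]. intros z Hz.
    change (dist M (g (iter k g y)) (g (iter k g z)) < eps). auto.
Qed.

Lemma open_preimage (M : Metric_Space) (U : Base M -> Prop) (g : Base M -> Base M) :
  is_open M U -> continuous_map M g -> is_open M (fun y => U (g y)).
Proof.
  intros HU Hg y Hy. destruct (HU _ Hy) as [r [Hr Hball]].
  destruct (Hg y r Hr) as [d [Hd Hclose]].
  exists d. split; [exact Hd|]. intros z Hz. apply Hball, Hclose, Hz.
Qed.

Lemma open_inter (M : Metric_Space) (U V : Base M -> Prop) :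
  is_open M U -> is_open M V -> is_open M (fun y => U y /\ V y).
Proof.
  intros HU HV y [HUy HVy].
  destruct (HU _ HUy) as [r1 [Hr1 H1]]. destruct (HV _ HVy) as [r2 [Hr2 H2]].
  exists (Rmin r1 r2). split; [apply Rmin_pos; assumption|].
  intros z Hz; unfold ball in Hz.
  pose proof (Rmin_l r1 r2); pose proof (Rmin_r r1 r2).
  split; [apply H1 | apply H2]; unfold ball; lra.
Qed.

Lemma open_full (M : Metric_Space) : is_open M (fun _ => True).
Proof. intros y _. exists 1. split; [lra | auto]. Qed.

Lemma ball_open (M : Metric_Space) (c : Base M) (r : R) : is_open M (ball M c r).
Proof.
  intros y Hy. unfold ball in *. exists (r - dist M c y). split; [lra|].
  intros z Hz. unfold ball in Hz. pose proof (dist_tri M c z y). lra.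
Qed.

Lemma ball_center (M : Metric_Space) (c : Base M) (r : R) : 0 < r -> ball M c r c.
Proof. intros Hr. unfold ball. rewrite (proj2 (dist_refl M c c) eq_refl). lra. Qed.

Lemma rectangle_in_prod_ball (M : Metric_Space) (c : Base M * Base M) (r : R)
    (a b : Base M) :
  ball M (fst c) r a -> ball M (snd c) r b -> ball (prod_space M) c r (a, b).
Proof. intros Ha Hb. unfold ball. simpl. unfold prod_dist. apply Rmax_lub_lt; assumption. Qed.

Lemma transitive_of_rectangles (M : Metric_Space) (g h : Base M -> Base M) :
  (forall U1 U2 V1 V2 : Base M -> Prop,
     is_open M U1 -> is_open M U2 -> is_open M V1 -> is_open M V2 ->
     (exists a, U1 a) -> (exists a, U2 a) -> (exists a, V1 a) -> (exists a, V2 a) ->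
     exists n : nat, (1 <= n)%nat /\
       exists a b, U1 a /\ U2 b /\ V1 (iter n g a) /\ V2 (iter n h b)) ->
  transitive (prod_space M) (prod_map g h).
Proof.
  intros Hrect U V HU HV [u Hu] [v Hv].
  destruct (HU u Hu) as [ru [Hru HUball]]. destruct (HV v Hv) as [rv [Hrv HVball]].
  destruct (Hrect (ball M (fst u) ru) (ball M (snd u) ru)
                  (ball M (fst v) rv) (ball M (snd v) rv))
    as [n [Hn [a [b [Ha [Hb [Hga Hhb]]]]]]];
    try apply ball_open;
    try (eexists; apply ball_center; assumption).
  exists n. split; [exact Hn|]. exists (a, b). split.
  - apply HUball, rectangle_in_prod_ball; assumption.
  - change (V (iter n (prod_map g h) (a, b))).
    rewrite iter_prod_map. apply HVball, rectangle_in_prod_ball; assumption.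
Qed.

Section DeltaTransitiveOrbit.

Variable M : Metric_Space.
Variable f : Base M -> Base M.
Hypothesis f_continuous : continuous_map M f.
Variable x : Base M.
Hypothesis x_delta : transitive_point (prod_space M) (prod_map f (iter 2 f)) (x, x).

Lemma delta_orbit_visits (A B : Base M -> Prop) :
  is_open M A -> is_open M B -> (exists a, A a) -> (exists b, B b) ->
  forall N, exists j, (N <= j)%nat /\ A (iter j f x) /\ B (iter (2 * j) f x).
Proof.
  intros HA HB [a Ha] [b Hb] N.
  destruct (HA a Ha) as [r1 [Hr1 H1]]. destruct (HB b Hb) as [r2 [Hr2 H2]].
  destruct (x_delta (a, b) (Rmin r1 r2) N (Rmin_pos _ _ Hr1 Hr2)) as [j [Hj Hd]].
  exists j. split; [exact Hj|].
  change (prod_dist M (iter j (prod_map f (iter 2 f)) (x, x)) (a, b) < Rmin r1 r2) in Hd.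
  rewrite iter_prod_map in Hd. unfold prod_dist in Hd. simpl in Hd.
  rewrite iter_iter2 in Hd.
  pose proof (Rmax_l (dist M (iter j f x) a) (dist M (iter (2 * j) f x) b)).
  pose proof (Rmax_r (dist M (iter j f x) a) (dist M (iter (2 * j) f x) b)).
  pose proof (Rmin_l r1 r2); pose proof (Rmin_r r1 r2).
  split; [apply H1 | apply H2]; unfold ball; rewrite dist_sym; lra.
Qed.

Lemma orbit_visits (A : Base M -> Prop) :
  is_open M A -> (exists a, A a) ->
  forall N, exists j, (N <= j)%nat /\ A (iter j f x).
Proof.
  intros HA HneA N.
  destruct (delta_orbit_visits A (fun _ => True) HA (open_full M) HneA
              (ex_intro _ x I) N) as [j [Hj [HAj _]]].
  exists j. split; assumption.
Qed.

Lemma three_visits (U1 U2 V1 : Base M -> Prop) :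
  is_open M U1 -> is_open M U2 -> is_open M V1 ->
  (exists a, U1 a) -> (exists a, U2 a) -> (exists a, V1 a) ->
  exists d i, U1 (iter i f x) /\ U2 (iter d f (iter i f x))
              /\ V1 (iter d f (iter (2 * i) f x)).
Proof.
  intros oU1 oU2 oV1 nU1 nU2 nV1.
  destruct (orbit_visits U1 oU1 nU1 0) as [p [_ Hp]].
  destruct (orbit_visits U2 oU2 nU2 p) as [q [Hpq Hq]].
  set (d := (q - p)%nat).
  destruct (orbit_visits V1 oV1 nV1 d) as [t [Hdt Ht]].
  (* [U1 /\ f^-d U2] contains [f^p x] and [f^-d V1] contains [f^(t-d) x]. *)
  assert (W_open : is_open M (fun y => U1 y /\ U2 (iter d f y))).
  { apply open_inter; [exact oU1 | apply open_preimage; [exact oU2 | apply continuous_iter; exact f_continuous]]. }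
  assert (W_nonempty : exists y, U1 y /\ U2 (iter d f y)).
  { exists (iter p f x). rewrite <- iter_add. replace (d + p)%nat with q by lia. auto. }
  assert (V1d_open : is_open M (fun y => V1 (iter d f y))).
  { apply open_preimage; [exact oV1 | apply continuous_iter; exact f_continuous]. }
  assert (V1d_nonempty : exists y, V1 (iter d f y)).
  { exists (iter (t - d) f x). rewrite <- iter_add. replace (d + (t - d))%nat with t by lia. exact Ht. }
  destruct (delta_orbit_visits _ _ W_open V1d_open W_nonempty V1d_nonempty 0)
    as [i [_ [[Hi1 Hi2] Hi3]]].
  exists d, i. auto.
Qed.

Lemma four_visits (U1 U2 V1 V2 : Base M -> Prop) :
  is_open M U1 -> is_open M U2 -> is_open M V1 -> is_open M V2 ->
  (exists a, U1 a) -> (exists a, U2 a) -> (exists a, V1 a) -> (exists a, V2 a) ->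
  exists i j, (1 <= j)%nat /\ U1 (iter i f x) /\ U2 (iter j f x)
              /\ V1 (iter i f (iter j f x)) /\ V2 (iter (2 * j) f x).
Proof.
  intros oU1 oU2 oV1 oV2 nU1 nU2 nV1 nV2.
  destruct (three_visits U1 U2 V1 oU1 oU2 oV1 nU1 nU2 nV1) as [d [i [Hi1 [Hi2 Hi3]]]].
  (* [U2 /\ f^-i V1] is open and contains [f^(d+i) x]. *)
  assert (O_open : is_open M (fun y => U2 y /\ V1 (iter i f y))).
  { apply open_inter; [exact oU2 | apply open_preimage; [exact oV1 | apply continuous_iter; exact f_continuous]]. }
  assert (O_nonempty : exists y, U2 y /\ V1 (iter i f y)).
  { exists (iter d f (iter i f x)). split; [exact Hi2|].
    replace (iter i f (iter d f (iter i f x))) with (iter d f (iter (2 * i) f x)); [exact Hi3|].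
    rewrite <- !iter_add. f_equal. lia. }
  destruct (delta_orbit_visits _ _ O_open oV2 O_nonempty nV2 1) as [j [Hj [[Hj1 Hj2] Hj3]]].
  exists i, j. auto.
Qed.

End DeltaTransitiveOrbit.

Theorem lemma5p4 (M : Metric_Space) (f : Base M -> Base M) :
  dynamical_system M f ->
  delta_transitive_12 M f ->
  weakly_mixing M f.
Proof.
  intros [_ f_continuous] [x x_delta].
  apply transitive_of_rectangles.
  intros U1 U2 V1 V2 oU1 oU2 oV1 oV2 nU1 nU2 nV1 nV2.
  destruct (four_visits M f f_continuous x x_delta U1 U2 V1 V2
              oU1 oU2 oV1 oV2 nU1 nU2 nV1 nV2)
    as [i [j [Hj [HU1 [HU2 [HV1 HV2]]]]]].
  (* The point [(f^i x, f^j x)] of [U1 x U2] is moved by [(f x f)^j] into [V1 x V2]. *)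
  exists j. split; [exact Hj|].
  exists (iter i f x), (iter j f x). repeat split; try assumption.
  - rewrite <- iter_add, Nat.add_comm, iter_add. exact HV1.
  - rewrite <- iter_add. replace (j + j)%nat with (2 * j)%nat by lia. exact HV2.
Qed.
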